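(* Assume the Population Invariant holds at all times and $n_0$ is sufficiently large (in particular $n_0\ge 40$). Then with high probability, for every interval $(t,t']$, the number $a$ of good IDs that join during the interval satisfies $a\le 23|S(t)|+4$.
   Context: Model. Time is continuous. At each time $x$ the system consists of a finite set $S(x)$ of IDs partitioned into good IDs $G(x)$ and bad IDs $B(x)=S(x)\setminus G(x)$. Membership changes only by join events (a new ID, never previously present, is added) and departure events (one ID removed), each at a distinct time. $|G(x)|\ge n_0$ for all $x$. Whenever a good ID departs (the adversary may choose when), the departing ID is chosen independently and uniformly at random from the set of good IDs currently in the system. Population Invariant: $|B(x)|<\frac16|S(x)|$ for all $x$. $A\triangle B$ is symmetric difference. The system lifetime consists of $n_0^{\gamma}$ join/departure events for a fixed constant $\gamma>0$; ''with high probability'' means with probability at least $1-O(1/n_0)$ over the system lifetime. Intervals: an interval beginning at time $t$ ends at the first time $t'>t$ with $|S(t')\triangle S(t)|\ge\frac58|S(t')|$ (so $|S(t')\triangle S(t)|=\lceil\frac58|S(t')|\rceil$), and the next interval starts at $t'$. *)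

From Stdlib Require Import Reals List Arith Lia ClassicalDescription.
Import ListNotations.

Inductive event : Type :=
| EJoin (x : nat) (good : bool)
| EDep (x : nat).

(* Moves of a (deterministic, adaptive) adversary: it chooses a join (ID and
   whether it is good), the departure of a bad ID of its choice, or to trigger
   a good departure, whose departing ID is chosen uniformly at random among
   the good IDs currently present. *)
Inductive move : Type :=
| MJoin (x : nat) (good : bool)
| MDepBad (x : nat)
| MDepGood.

Record config : Type := Config { cS : list nat; cG : list nat }.

Definition memb (x : nat) (l : list nat) : bool := existsb (Nat.eqb x) l.

Definition step (c : config) (e : event) : config :=
  match e with
  | EJoin x b => Config (x :: cS c) (if b then x :: cG c else cG c)
  | EDep x => Config (remove Nat.eq_dec x (cS c)) (remove Nat.eq_dec x (cG c))
  end.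

Definition state (S0 G0 : list nat) (h : list event) : config :=
  fold_left step h (Config S0 G0).

(* configuration at "time" k, i.e. after the first k events of h *)
Definition state_at (S0 G0 : list nat) (h : list event) (k : nat) : config :=
  state S0 G0 (firstn k h).

Definition bads (c : config) : list nat :=
  filter (fun x => negb (memb x (cG c))) (cS c).

Definition seen (S0 : list nat) (h : list event) : list nat :=
  S0 ++ flat_map (fun e => match e with EJoin x _ => [x] | EDep _ => [] end) h.

Definition symdiff_size (A B : list nat) : nat :=
  length (filter (fun x => negb (memb x B)) A)
  + length (filter (fun x => negb (memb x A)) B).

Definition end_cond (S0 G0 : list nat) (h : list event) (i j : nat) : Prop :=
  5 * length (cS (state_at S0 G0 h j))
  <= 8 * symdiff_size (cS (state_at S0 G0 h j)) (cS (state_at S0 G0 h i)).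

Definition first_end (S0 G0 : list nat) (h : list event) (i j : nat) : Prop :=
  i < j /\ j <= length h /\ end_cond S0 G0 h i j /\
  (forall k, i < k < j -> ~ end_cond S0 G0 h i k).

Inductive boundary (S0 G0 : list nat) (h : list event) : nat -> Prop :=
| boundary0 : boundary S0 G0 h 0
| boundaryS : forall i j, boundary S0 G0 h i -> first_end S0 G0 h i j ->
    boundary S0 G0 h j.

Definition interval (S0 G0 : list nat) (h : list event) (i j : nat) : Prop :=
  boundary S0 G0 h i /\ first_end S0 G0 h i j.

(* number of good IDs joining during (i, j]: events number i+1 .. j *)
Definition good_joins (h : list event) (i j : nat) : nat :=
  length (filter (fun e => match e with EJoin _ true => true | _ => false end)
                 (firstn (j - i) (skipn i h))).

(* Histories reachable under adversary A (any outcome of the random choices) *)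
Inductive reachable (S0 G0 : list nat) (A : list event -> move)
  : list event -> Prop :=
| reach_nil : reachable S0 G0 A []
| reach_join : forall h x b, reachable S0 G0 A h -> A h = MJoin x b ->
    reachable S0 G0 A (h ++ [EJoin x b])
| reach_depbad : forall h x, reachable S0 G0 A h -> A h = MDepBad x ->
    reachable S0 G0 A (h ++ [EDep x])
| reach_depgood : forall h x, reachable S0 G0 A h -> A h = MDepGood ->
    In x (cG (state S0 G0 h)) -> reachable S0 G0 A (h ++ [EDep x]).

(* Standing assumptions for a lifetime of L events: the initial configuration
   is well formed; at every reachable time |G| >= n0 and the Population
   Invariant |B| < |S|/6 hold; joins use IDs never previously present; bad
   departures remove a bad ID currently present. *)
Definition valid (n0 L : nat) (S0 G0 : list nat) (A : list event -> move)
  : Prop :=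
  NoDup S0 /\ NoDup G0 /\ incl G0 S0 /\
  forall h, reachable S0 G0 A h -> length h <= L ->
    n0 <= length (cG (state S0 G0 h)) /\
    6 * length (bads (state S0 G0 h)) < length (cS (state S0 G0 h)) /\
    (length h < L ->
      match A h with
      | MJoin x _ => ~ In x (seen S0 h)
      | MDepBad x => In x (bads (state S0 G0 h))
      | MDepGood => True
      end).

Definition indicator (P : Prop) : R :=
  if excluded_middle_informative P then 1%R else 0%R.

Fixpoint prob (S0 G0 : list nat) (A : list event -> move)
  (P : list event -> Prop) (n : nat) (h : list event) : R :=
  match n with
  | O => indicator (P h)
  | S n' =>
      match A h with
      | MJoin x b => prob S0 G0 A P n' (h ++ [EJoin x b])
      | MDepBad x => prob S0 G0 A P n' (h ++ [EDep x])
      | MDepGood =>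
          let g := cG (state S0 G0 h) in
          (/ INR (length g) *
           fold_right (fun x acc => prob S0 G0 A P n' (h ++ [EDep x]) + acc)
                      0 g)%R
      end
  end.

Definition some_interval_too_many_joins (S0 G0 : list nat) (h : list event)
  : Prop :=
  exists i j, interval S0 G0 h i j /\
    23 * length (cS (state_at S0 G0 h i)) + 4 < good_joins h i j.

(* Fix a start time t with reference set S(t) of size s.  While
   the interval is open, |S \ S(t)| + |S(t) \ S| < (5/8)|S|, and the
   Population Invariant gives |S| < (6/5)|G|; so fewer than 3/4 of the good
   IDs are new, and the weight w = |G \ S(t)| + 6 |S(t) \ S| stays below 10 s.
   The potential (9/8)^(g - w - 12 s), g the number of good joins so far, is a
   supermartingale: good joins leave the exponent unchanged, bad departures
   lower it, and a uniformly random good departure lowers it by 6 with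
   probability > 1/4 and raises it by 1 otherwise.  It starts at most at
   (9/8)^(-12 n0) and exceeds 1 as soon as g >= 23 s + 4.  Capping it at 1
   and summing over the L start times gives a supermartingale dominating the
   bad event, so its probability is at most L (9/8)^(-12 n0) <= C / n0 when
   L <= n0^gamma. *)

From Stdlib Require Import Reals List Arith Lia Lra ZArith ClassicalDescription.
Import ListNotations.

Lemma memb_In x l : memb x l = true <-> In x l.
Proof.
  unfold memb. rewrite existsb_exists. split.
  - intros [y [Hy E]]. apply Nat.eqb_eq in E. subst. exact Hy.
  - intros H. exists x. split; [exact H | apply Nat.eqb_refl].
Qed.

Definition notin (l : list nat) (y : nat) : bool := negb (memb y l).

Lemma notin_true l y : notin l y = true <-> ~ In y l.
Proof.
  unfold notin. rewrite <- memb_In. destruct (memb y l); simpl; intuition congruence.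
Qed.

Lemma notin_false l y : notin l y = false <-> In y l.
Proof.
  unfold notin. rewrite <- memb_In. destruct (memb y l); simpl; intuition congruence.
Qed.

Lemma filter_length_mono {T} (f g : T -> bool) l :
  (forall y, In y l -> f y = true -> g y = true) ->
  length (filter f l) <= length (filter g l).
Proof.
  induction l as [|a l IH]; simpl; intros H; auto.
  destruct (f a) eqn:Ea.
  - rewrite (H a (or_introl eq_refl) Ea). simpl. apply le_n_S, IH; auto.
  - destruct (g a); simpl; [apply le_S|]; apply IH; auto.
Qed.

Lemma filter_length_mono_strict {T} (f g : T -> bool) l z :
  (forall y, In y l -> f y = true -> g y = true) ->
  In z l -> g z = true -> f z = false ->
  length (filter f l) < length (filter g l).
Proof.
  induction l as [|a l IH]; simpl; intros H Hz Gz Fz; [contradiction|].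
  assert (Hl : forall y, In y l -> f y = true -> g y = true) by auto.
  destruct Hz as [<-|Hz].
  - rewrite Fz, Gz. simpl. pose proof (filter_length_mono f g l Hl). lia.
  - specialize (IH Hl Hz Gz Fz).
    destruct (f a) eqn:Ea; [rewrite (H a (or_introl eq_refl) Ea)|destruct (g a)];
      simpl; lia.
Qed.

Lemma filter_length_incl (f : nat -> bool) l l' :
  NoDup l -> incl (filter f l) l' -> length (filter f l) <= length l'.
Proof. intros. apply NoDup_incl_length; auto. apply NoDup_filter; auto. Qed.

Lemma NoDup_remove_elt x l : NoDup l -> NoDup (remove Nat.eq_dec x l).
Proof. intros. rewrite <- remove_alt. apply NoDup_filter. assumption. Qed.

Lemma filter_remove_rejected (f : nat -> bool) x l :
  f x = false -> filter f (remove Nat.eq_dec x l) = filter f l.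
Proof.
  intros Hf. induction l as [|a l IH]; simpl; auto.
  destruct (Nat.eq_dec x a) as [<-|]; simpl.
  - rewrite Hf. exact IH.
  - destruct (f a); simpl; congruence.
Qed.

Lemma filter_remove_length (f : nat -> bool) x l : NoDup l ->
  length (filter f l) <= length (filter f (remove Nat.eq_dec x l)) + 1.
Proof.
  induction 1 as [|a l Ha Hl IH]; simpl; auto.
  destruct (Nat.eq_dec x a) as [<-|].
  - rewrite notin_remove by exact Ha. destruct (f x); simpl; lia.
  - simpl. destruct (f a); simpl; lia.
Qed.

Lemma firstn_snoc {T} k (h : list T) e :
  k <= length h -> firstn k (h ++ [e]) = firstn k h.
Proof.
  intros Hk. rewrite firstn_app. replace (k - length h) with 0 by lia.
  simpl. apply app_nil_r.
Qed.

Lemma state_snoc S0 G0 h e : state S0 G0 (h ++ [e]) = step (state S0 G0 h) e.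
Proof. unfold state. rewrite fold_left_app. reflexivity. Qed.

Lemma state_at_snoc S0 G0 h e k : k <= length h ->
  state_at S0 G0 (h ++ [e]) k = state_at S0 G0 h k.
Proof. intros. unfold state_at. rewrite firstn_snoc; auto. Qed.

Lemma state_at_length S0 G0 h : state_at S0 G0 h (length h) = state S0 G0 h.
Proof. unfold state_at. rewrite firstn_all. reflexivity. Qed.

Definition good_join (e : event) : nat :=
  match e with EJoin _ true => 1 | _ => 0 end.

Lemma good_join_le_1 e : good_join e <= 1.
Proof. destruct e as [? [|]|]; simpl; lia. Qed.

Lemma good_joins_snoc h e i j : i <= j <= length h ->
  good_joins (h ++ [e]) i j = good_joins h i j.
Proof.
  intros Hij. unfold good_joins. rewrite skipn_app.
  replace (i - length h) with 0 by lia. simpl.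
  rewrite firstn_app, length_skipn.
  replace (j - i - (length h - i)) with 0 by lia.
  simpl. rewrite app_nil_r. reflexivity.
Qed.

Lemma good_joins_last h e i : i <= length h ->
  good_joins (h ++ [e]) i (length (h ++ [e]))
  = good_joins h i (length h) + good_join e.
Proof.
  intros Hi. unfold good_joins. rewrite skipn_app, length_app.
  replace (i - length h) with 0 by lia. cbn [skipn].
  rewrite firstn_all2 by (rewrite length_app, length_skipn; cbn [length]; lia).
  rewrite (firstn_all2 (n := length h - i) (skipn i h))
    by (rewrite length_skipn; lia).
  rewrite filter_app, length_app. f_equal. destruct e as [x [|]|x]; reflexivity.
Qed.

Lemma end_cond_snoc S0 G0 h e i k : i <= length h -> k <= length h ->
  (end_cond S0 G0 (h ++ [e]) i k <-> end_cond S0 G0 h i k).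
Proof. intros. unfold end_cond. rewrite !state_at_snoc by auto. tauto. Qed.

Lemma seen_snoc S0 h e : seen S0 (h ++ [e]) =
  seen S0 h ++ match e with EJoin x _ => [x] | EDep _ => [] end.
Proof.
  unfold seen. rewrite flat_map_app. simpl. rewrite app_nil_r, app_assoc.
  reflexivity.
Qed.

Lemma seen_firstn S0 h k : incl (seen S0 (firstn k h)) (seen S0 h).
Proof.
  rewrite <- (firstn_skipn k h) at 2. unfold seen. rewrite flat_map_app.
  intros y Hy. apply in_app_or in Hy. apply in_or_app.
  destruct Hy; auto. right. apply in_or_app. auto.
Qed.

Lemma reachable_firstn S0 G0 A h k :
  reachable S0 G0 A h -> reachable S0 G0 A (firstn k h).
Proof.
  induction 1 as [|h x b R IH Ah|h x R IH Ah|h x R IH Ah Hx].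
  1: rewrite firstn_nil; constructor.
  all: destruct (le_lt_dec k (length h)) as [Hk|Hk];
    [rewrite firstn_snoc; auto
    | rewrite firstn_all2 by (rewrite length_app; simpl; lia)].
  - apply reach_join; auto.
  - apply reach_depbad; auto.
  - eapply reach_depgood; eauto.
Qed.

Definition weight (Sl : list nat) (c : config) : nat :=
  length (filter (notin Sl) (cG c)) + 6 * length (filter (notin (cS c)) Sl).

Lemma departed_after_remove Sl S x :
  length (filter (notin S) Sl) <= length (filter (notin (remove Nat.eq_dec x S)) Sl).
Proof.
  apply filter_length_mono. intros y _ Hy. apply notin_true in Hy.
  apply notin_true. intros H. apply in_remove in H. tauto.
Qed.

Lemma weight_join Sl c x b : ~ In x Sl ->
  weight Sl (step c (EJoin x b)) = weight Sl c + good_join (EJoin x b).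
Proof.
  intros Hx. unfold weight, step; simpl.
  rewrite (filter_ext_in (notin (x :: cS c)) (notin (cS c))).
  2: { intros y Hy. unfold notin, memb. simpl.
       destruct (Nat.eqb_spec y x); [subst; contradiction | reflexivity]. }
  destruct b; simpl; [|lia].
  replace (notin Sl x) with true by (symmetry; apply notin_true; auto).
  simpl. lia.
Qed.

Lemma weight_dep_bad Sl c x : ~ In x (cG c) ->
  weight Sl c <= weight Sl (step c (EDep x)).
Proof.
  intros Hx. unfold weight, step; simpl. rewrite notin_remove by auto.
  pose proof (departed_after_remove Sl (cS c) x). lia.
Qed.

Lemma weight_dep_old Sl c x : In x (cS c) -> In x Sl ->
  weight Sl c + 6 <= weight Sl (step c (EDep x)).
Proof.
  intros HS Hx. unfold weight, step; simpl.
  rewrite filter_remove_rejected by (apply notin_false; exact Hx).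
  assert (length (filter (notin (cS c)) Sl)
          < length (filter (notin (remove Nat.eq_dec x (cS c))) Sl)).
  { apply filter_length_mono_strict with x; auto.
    - intros y _ Hy. apply notin_true in Hy. apply notin_true.
      intros H. apply in_remove in H. tauto.
    - apply notin_true. intros H. apply in_remove in H. tauto.
    - apply notin_false. exact HS. }
  lia.
Qed.

Lemma weight_dep_any Sl c x : NoDup (cG c) ->
  weight Sl c <= weight Sl (step c (EDep x)) + 1.
Proof.
  intros ND. unfold weight, step; simpl.
  pose proof (filter_remove_length (notin Sl) x (cG c) ND).
  pose proof (departed_after_remove Sl (cS c) x). lia.
Qed.

Local Open Scope R_scope.

Definition pot (e : Z) : R := powerRZ (9/8) e.

Lemma pot_pos e : 0 < pot e.
Proof. apply powerRZ_lt. lra. Qed.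

Lemma pot_add a b : pot (a + b) = pot a * pot b.
Proof. apply powerRZ_add. lra. Qed.

Lemma pot_nat n : pot (Z.of_nat n) = (9/8) ^ n.
Proof. unfold pot. rewrite pow_powerRZ. reflexivity. Qed.

Lemma pot_mono a b : (a <= b)%Z -> pot a <= pot b.
Proof.
  intros Hab. replace b with (a + Z.of_nat (Z.to_nat (b - a)))%Z by lia.
  rewrite pot_add, pot_nat. pose proof (pot_pos a).
  pose proof (pow_R1_Rle (9/8) (Z.to_nat (b - a)) ltac:(lra)). nra.
Qed.

Lemma pot_ge_1 e : (0 <= e)%Z -> 1 <= pot e.
Proof. intros. change 1 with (pot 0). apply pot_mono. assumption. Qed.

(* The two one-step factors of a good departure: leaving reference ID
   (exponent -6) and leaving new ID (exponent +1). *)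
Lemma pot_minus_6 : pot (-6) <= 1/2.
Proof. unfold pot. simpl. lra. Qed.

Lemma pot_1 : pot 1 = 9/8.
Proof. unfold pot. simpl. lra. Qed.

(* [(9/8)^12 >= 2], hence [pot (-12 n) <= 2^-n]. *)
Lemma pot_minus_12n n : pot (-12 * Z.of_nat n) * 2 ^ n <= 1.
Proof.
  assert (Hinv : pot (-12 * Z.of_nat n) * pot (Z.of_nat (12 * n)) = 1).
  { rewrite <- pot_add. replace (-12 * Z.of_nat n + Z.of_nat (12 * n))%Z with 0%Z
      by lia. reflexivity. }
  rewrite pot_nat, pow_mult in Hinv.
  assert (2 ^ n <= ((9/8) ^ 12) ^ n) by (apply pow_incr; simpl; lra).
  pose proof (pot_pos (-12 * Z.of_nat n)). nra.
Qed.

Definition fsum (l : list nat) (f : nat -> R) : R :=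
  fold_right (fun x acc => f x + acc) 0 l.

Lemma fsum_mono l f g : (forall x, In x l -> f x <= g x) -> fsum l f <= fsum l g.
Proof.
  induction l as [|a l IH]; simpl; intros H; [lra|].
  pose proof (H a (or_introl eq_refl)).
  pose proof (IH (fun x Hx => H x (or_intror Hx))). lra.
Qed.

Lemma fsum_le_const l f c :
  (forall x, In x l -> f x <= c) -> fsum l f <= INR (length l) * c.
Proof.
  induction l as [|a l IH]; intros H; [simpl; lra|].
  change (f a + fsum l f <= INR (S (length l)) * c). rewrite S_INR.
  pose proof (H a (or_introl eq_refl)).
  pose proof (IH (fun x Hx => H x (or_intror Hx))). lra.
Qed.

Lemma fsum_nonneg l f : (forall x, In x l -> 0 <= f x) -> 0 <= fsum l f.
Proof.
  induction l as [|a l IH]; simpl; intros H; [lra|].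
  pose proof (H a (or_introl eq_refl)).
  pose proof (IH (fun x Hx => H x (or_intror Hx))). lra.
Qed.

Lemma fsum_ge_term l f j :
  (forall x, In x l -> 0 <= f x) -> In j l -> f j <= fsum l f.
Proof.
  induction l as [|a l IH]; simpl; intros Hnn Hj; [contradiction|].
  assert (Hl : forall x, In x l -> 0 <= f x) by auto.
  pose proof (fsum_nonneg l f Hl). pose proof (Hnn a (or_introl eq_refl)).
  destruct Hj as [->|Hj]; [lra|]. specialize (IH Hl Hj). lra.
Qed.

Lemma fsum_scal c l f : c * fsum l f = fsum l (fun x => c * f x).
Proof. induction l as [|a l IH]; simpl; [lra|]. rewrite <- IH. lra. Qed.

Lemma fsum_exchange l m (f : nat -> nat -> R) :
  fsum l (fun x => fsum m (fun i => f i x)) = fsum m (fun i => fsum l (f i)).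
Proof.
  induction l as [|a l IH]; simpl.
  - induction m as [|b m IHm]; simpl; [lra|]. rewrite <- IHm. lra.
  - rewrite IH. clear IH. induction m as [|b m IHm]; simpl; lra.
Qed.

Lemma average_contracts (G : list nat) (p : nat -> bool) (F : R) (f : nat -> R) :
  0 <= F ->
  (4 * length (filter (fun x => negb (p x)) G) < 3 * length G)%nat ->
  (forall x, In x G -> f x <= if p x then F * pot (-6) else F * pot 1) ->
  / INR (length G) * fsum G f <= F.
Proof.
  intros HF Hnew Hf.
  set (d := length (filter p G)). set (a := length (filter (fun x => negb (p x)) G)).
  assert (Hsum : fsum G f <= INR d * (F / 2) + INR a * (F * (9/8))).
  { unfold d, a. clear d a Hnew. induction G as [|y G IH]; simpl; [lra|].
    assert (Hy := Hf y (or_introl eq_refl)).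
    specialize (IH (fun x Hx => Hf x (or_intror Hx))).
    rewrite pot_1 in Hy. pose proof pot_minus_6.
    destruct (p y); cbn [filter negb length]; rewrite ?S_INR; nra. }
  assert (HG : INR (length G) = INR d + INR a)
    by (rewrite <- (filter_length p G), plus_INR; reflexivity).
  assert (Ha : 4 * INR a < 3 * INR (length G)).
  { apply lt_INR in Hnew. rewrite !mult_INR in Hnew.
    replace (INR 4) with 4 in Hnew by (simpl; lra).
    replace (INR 3) with 3 in Hnew by (simpl; lra). exact Hnew. }
  assert (Hpos : 0 < INR (length G)) by (pose proof (pos_INR a); lra).
  apply Rmult_le_reg_l with (INR (length G)); auto.
  rewrite <- Rmult_assoc, Rinv_r by lra. pose proof (pos_INR d). nra.
Qed.

Local Close Scope R_scope.

Section Lifetime.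

Variables (n0 L : nat) (S0 G0 : list nat) (A : list event -> move).

Local Open Scope R_scope.

Definition expected_next (f : list event -> R) (h : list event) : R :=
  match A h with
  | MJoin x b => f (h ++ [EJoin x b])
  | MDepBad x => f (h ++ [EDep x])
  | MDepGood =>
      / INR (length (cG (state S0 G0 h))) *
      fsum (cG (state S0 G0 h)) (fun x => f (h ++ [EDep x]))
  end.

Lemma prob_succ P n h :
  prob S0 G0 A P (S n) h = expected_next (prob S0 G0 A P n) h.
Proof. reflexivity. Qed.

Lemma expected_next_mono f g h : reachable S0 G0 A h ->
  (forall e, reachable S0 G0 A (h ++ [e]) -> f (h ++ [e]) <= g (h ++ [e])) ->
  expected_next f h <= expected_next g h.
Proof.
  intros R Hfg. unfold expected_next. destruct (A h) as [x b|x|] eqn:Ah.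
  - apply Hfg. apply reach_join; auto.
  - apply Hfg. apply reach_depbad; auto.
  - destruct (cG (state S0 G0 h)) as [|y G] eqn:EG; [simpl; lra|].
    apply Rmult_le_compat_l.
    + left. apply Rinv_0_lt_compat, lt_0_INR. simpl. lia.
    + apply fsum_mono. intros x Hx. apply Hfg.
      eapply reach_depgood; eauto. rewrite EG. exact Hx.
Qed.

Lemma expected_next_le_const f h c : 0 <= c -> (forall h', f h' <= c) ->
  expected_next f h <= c.
Proof.
  intros Hc Hf. unfold expected_next. destruct (A h); auto.
  destruct (cG (state S0 G0 h)) as [|y G] eqn:EG; [simpl; rewrite Rmult_0_r; exact Hc|].
  assert (Hn : 0 < INR (length (y :: G))) by (apply lt_0_INR; simpl; lia).
  pose proof (fsum_le_const (y :: G) (fun x => f (h ++ [EDep x])) c (fun x _ => Hf _)).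
  apply Rmult_le_reg_l with (INR (length (y :: G))); auto.
  rewrite <- Rmult_assoc, Rinv_r by lra. lra.
Qed.

Lemma expected_next_fsum (I : list nat) (f : nat -> list event -> R) h :
  expected_next (fun h' => fsum I (fun i => f i h')) h
  = fsum I (fun i => expected_next (f i) h).
Proof.
  unfold expected_next. destruct (A h); try reflexivity.
  rewrite fsum_exchange, fsum_scal. reflexivity.
Qed.

Lemma prob_le_supermartingale (P : list event -> Prop) (Phi : list event -> R) :
  (forall h, reachable S0 G0 A h -> length h = L -> indicator (P h) <= Phi h) ->
  (forall h, reachable S0 G0 A h -> (length h < L)%nat ->
     expected_next Phi h <= Phi h) ->
  forall n h, reachable S0 G0 A h -> (length h + n = L)%nat ->
    prob S0 G0 A P n h <= Phi h.
Proof.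
  intros Hend Hstep. induction n as [|n IH]; intros h R Hl.
  - apply Hend; auto. lia.
  - rewrite prob_succ. eapply Rle_trans; [|apply Hstep; auto; lia].
    apply expected_next_mono; auto. intros e Re. apply IH; auto.
    rewrite length_app. simpl. lia.
Qed.

Local Close Scope R_scope.

Definition well_formed (h : list event) (c : config) : Prop :=
  NoDup (cS c) /\ NoDup (cG c) /\ incl (cG c) (cS c) /\ incl (cS c) (seen S0 h).

Lemma well_formed_join h c x b : ~ In x (seen S0 h) -> well_formed h c ->
  well_formed (h ++ [EJoin x b]) (step c (EJoin x b)).
Proof.
  intros Hx [N1 [N2 [N3 N4]]]. unfold well_formed. rewrite seen_snoc. simpl.
  assert (HxS : ~ In x (cS c)) by auto.
  repeat split.
  - constructor; auto.
  - destruct b; auto. constructor; auto.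
  - destruct b; [apply incl_cons; [left; auto|]|]; apply incl_tl; auto.
  - apply incl_cons; [apply in_or_app; right; left; auto|].
    intros y Hy. apply in_or_app. left. auto.
Qed.

Lemma well_formed_dep h c x : well_formed h c ->
  well_formed (h ++ [EDep x]) (step c (EDep x)).
Proof.
  intros [N1 [N2 [N3 N4]]]. unfold well_formed. rewrite seen_snoc, app_nil_r.
  simpl. repeat split; try apply NoDup_remove_elt; auto.
  - intros y Hy. apply in_remove in Hy.
    apply in_in_remove; [tauto | apply N3; tauto].
  - intros y Hy. apply in_remove in Hy. apply N4. tauto.
Qed.

Hypothesis Hvalid : valid n0 L S0 G0 A.

Lemma valid_at h : reachable S0 G0 A h -> length h <= L ->
  n0 <= length (cG (state S0 G0 h)) /\
  6 * length (bads (state S0 G0 h)) < length (cS (state S0 G0 h)) /\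
  (length h < L ->
    match A h with
    | MJoin x _ => ~ In x (seen S0 h)
    | MDepBad x => In x (bads (state S0 G0 h))
    | MDepGood => True
    end).
Proof. destruct Hvalid as [_ [_ [_ HV]]]. apply HV. Qed.

(* Since joins use fresh IDs, every reachable configuration is well formed. *)
Lemma well_formed_reachable h : reachable S0 G0 A h -> length h <= L ->
  well_formed h (state S0 G0 h).
Proof.
  destruct Hvalid as [ND0 [NG0 [I0 _]]].
  induction 1 as [|h x b R IH Ah|h x R IH Ah|h x R IH Ah Hx];
    rewrite ?length_app; simpl; intros Hl.
  - unfold well_formed, state, seen. simpl. rewrite app_nil_r.
    repeat split; auto. apply incl_refl.
  - destruct (valid_at h R ltac:(lia)) as [_ [_ Hmove]].
    specialize (Hmove ltac:(lia)). rewrite Ah in Hmove.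
    rewrite state_snoc. apply well_formed_join; auto. apply IH. lia.
  - rewrite state_snoc. apply well_formed_dep, IH. lia.
  - rewrite state_snoc. apply well_formed_dep, IH. lia.
Qed.

Definition start_ids (i : nat) (h : list event) : list nat :=
  cS (state_at S0 G0 h i).

Definition overflowed (i : nat) (h : list event) : Prop :=
  exists j, i < j <= length h /\
    (forall k, i < k < j -> ~ end_cond S0 G0 h i k) /\
    23 * length (start_ids i h) + 4 < good_joins h i j.

Definition still_open (i : nat) (h : list event) : Prop :=
  forall k, i < k <= length h -> ~ end_cond S0 G0 h i k.

Lemma start_ids_snoc i h e : i <= length h ->
  start_ids i (h ++ [e]) = start_ids i h.
Proof. intros. unfold start_ids. rewrite state_at_snoc; auto. Qed.

Lemma start_ids_facts i h : reachable S0 G0 A h -> length h <= L ->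
  NoDup (start_ids i h) /\ incl (start_ids i h) (seen S0 h) /\
  n0 <= length (start_ids i h).
Proof.
  intros R Hl. unfold start_ids, state_at.
  assert (Rk := reachable_firstn S0 G0 A h i R).
  assert (Hk : length (firstn i h) <= L) by (rewrite length_firstn; lia).
  destruct (well_formed_reachable _ Rk Hk) as [N1 [N2 [N3 N4]]].
  destruct (valid_at _ Rk Hk) as [HG _].
  pose proof (NoDup_incl_length N2 N3).
  repeat split; [auto| |lia]. intros y Hy. apply (seen_firstn S0 h i), N4, Hy.
Qed.

Lemma overflowed_snoc_inv i h e : i <= length h -> overflowed i (h ++ [e]) ->
  overflowed i h \/
  (still_open i h /\
   23 * length (start_ids i h) + 4 < good_joins h i (length h) + good_join e).
Proof.
  intros Hi [j [Hj [Hk Hg]]]. rewrite length_app in Hj; simpl in Hj.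
  rewrite start_ids_snoc in Hg by auto.
  destruct (Nat.eq_dec j (S (length h))) as [->|Hne].
  - right. split.
    + intros k Hk'. rewrite <- end_cond_snoc with (e := e) by lia. apply Hk. lia.
    + replace (S (length h)) with (length (h ++ [e])) in Hg
        by (rewrite length_app; simpl; lia).
      rewrite good_joins_last in Hg by auto. exact Hg.
  - left. exists j. split; [lia|]. split.
    + intros k Hk'. rewrite <- end_cond_snoc with (e := e) by lia. apply Hk. lia.
    + rewrite good_joins_snoc in Hg by lia. exact Hg.
Qed.

Lemma still_open_snoc_inv i h e : i <= length h ->
  still_open i (h ++ [e]) -> still_open i h.
Proof.
  intros Hi Ho k Hk. rewrite <- end_cond_snoc with (e := e) by lia.
  apply Ho. rewrite length_app. simpl. lia.
Qed.

(** Good joins leave it unchanged (they also raise the weight), so it can only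
    grow through departures of new good IDs, which the random choice of the
    departing ID makes rare while the interval is open. *)

Definition exponent (i : nat) (h : list event) : Z :=
  (Z.of_nat (good_joins h i (length h))
   - Z.of_nat (weight (start_ids i h) (state S0 G0 h))
   - 12 * Z.of_nat (length (start_ids i h)))%Z.

Lemma exponent_snoc i h e : i <= length h ->
  exponent i (h ++ [e]) =
  (exponent i h + Z.of_nat (good_join e)
   + Z.of_nat (weight (start_ids i h) (state S0 G0 h))
   - Z.of_nat (weight (start_ids i h) (step (state S0 G0 h) e)))%Z.
Proof.
  intros Hi. unfold exponent.
  rewrite good_joins_last, start_ids_snoc, state_snoc by auto. lia.
Qed.

Lemma open_symdiff_small i h : i <= length h -> still_open i h ->
  0 < length (cS (state S0 G0 h)) ->
  8 * (length (filter (notin (start_ids i h)) (cS (state S0 G0 h)))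
       + length (filter (notin (cS (state S0 G0 h))) (start_ids i h)))
  < 5 * length (cS (state S0 G0 h)).
Proof.
  intros Hi Ho HS. destruct (Nat.eq_dec i (length h)) as [->|Hne].
  - unfold start_ids. rewrite state_at_length.
    rewrite !(filter_ext_in _ (fun _ => false)), filter_false;
      [simpl; lia| intros y Hy; apply notin_false, Hy ..].
  - specialize (Ho (length h) ltac:(lia)).
    unfold end_cond, symdiff_size in Ho. rewrite state_at_length in Ho.
    fold (start_ids i h) in Ho. unfold notin. lia.
Qed.

Lemma open_interval_bounds i h : reachable S0 G0 A h -> length h <= L ->
  i <= length h -> still_open i h ->
  4 * length (filter (notin (start_ids i h)) (cG (state S0 G0 h)))
    < 3 * length (cG (state S0 G0 h)) /\
  weight (start_ids i h) (state S0 G0 h) < 10 * length (start_ids i h).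
Proof.
  intros R Hl Hi Ho.
  destruct (valid_at h R Hl) as [_ [Hbad _]].
  destruct (well_formed_reachable h R Hl) as [N1 [N2 [N3 _]]].
  destruct (start_ids_facts i h R Hl) as [NSl _].
  pose proof (open_symdiff_small i h Hi Ho ltac:(lia)) as Hsym.
  unfold weight.
  set (Sl := start_ids i h) in *. set (c := state S0 G0 h) in *.
  set (X := length (filter (notin Sl) (cS c))) in *.
  set (Y := length (filter (notin (cS c)) Sl)) in *.
  (* new good IDs are new present IDs *)
  assert (HnewG : length (filter (notin Sl) (cG c)) <= X).
  { apply filter_length_incl; auto. intros y Hy. apply filter_In in Hy.
    apply filter_In. split; [apply N3|]; tauto. }
  (* [|S| <= |G| + |B|], combined below with [6 |B| < |S|] *)
  assert (HSB : length (cS c) <= length (cG c) + length (bads c)).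
  { rewrite <- (filter_length (fun y => memb y (cG c)) (cS c)).
    assert (length (filter (fun y => memb y (cG c)) (cS c)) <= length (cG c)).
    { apply filter_length_incl; auto. intros y Hy. apply filter_In in Hy.
      apply memb_In. tauto. }
    unfold bads. lia. }
  assert (HSs : length (cS c) <= length Sl + X).
  { rewrite <- (filter_length (fun y => memb y Sl) (cS c)).
    assert (length (filter (fun y => memb y Sl) (cS c)) <= length Sl).
    { apply filter_length_incl; auto. intros y Hy. apply filter_In in Hy.
      apply memb_In. tauto. }
    unfold X, notin. lia. }
  lia.
Qed.

Local Open Scope R_scope.

(* The potential [(9/8)^exponent] of an open interval is a supermartingale:
   joins keep it, bad departures lower it, and a good departure multiplies it
   by at most [(9/8)^-6] (reference ID) or [9/8] (new ID), the latter with
   probability below 3/4. *)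
Lemma potential_drift i h : reachable S0 G0 A h -> (length h < L)%nat ->
  (i <= length h)%nat -> still_open i h ->
  expected_next (fun h' => pot (exponent i h')) h <= pot (exponent i h).
Proof.
  intros R Hl Hi Ho.
  destruct (valid_at h R ltac:(lia)) as [_ [_ Hmove]]. specialize (Hmove Hl).
  destruct (well_formed_reachable h R ltac:(lia)) as [_ [NG [GS _]]].
  destruct (start_ids_facts i h R ltac:(lia)) as [_ [Sseen _]].
  destruct (open_interval_bounds i h R ltac:(lia) Hi Ho) as [Hnew _].
  set (Sl := start_ids i h) in *. set (c := state S0 G0 h) in *.
  unfold expected_next. destruct (A h) as [x b|x|] eqn:Ah.
  - apply pot_mono. rewrite exponent_snoc by auto. fold Sl c.
    rewrite (weight_join Sl c x b) by (intros HxS; apply Hmove, Sseen, HxS). lia.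
  - assert (HxG : ~ In x (cG c)).
    { unfold bads in Hmove. apply filter_In in Hmove.
      destruct Hmove as [_ Hm]. apply notin_true. exact Hm. }
    apply pot_mono. rewrite exponent_snoc by auto. fold Sl c.
    pose proof (weight_dep_bad Sl c x HxG). cbn [good_join]. lia.
  - apply (average_contracts _ (fun x => memb x Sl)); [left; apply pot_pos|exact Hnew|].
    intros x Hx. destruct (memb x Sl) eqn:Em; rewrite <- pot_add; apply pot_mono;
      rewrite exponent_snoc by auto; fold Sl c.
    + apply memb_In in Em. pose proof (weight_dep_old Sl c x (GS x Hx) Em). cbn [good_join]. lia.
    + pose proof (weight_dep_any Sl c x NG). cbn [good_join]. lia.
Qed.

Definition initial_bound : R := pot (-12 * Z.of_nat n0).

Definition capped_potential (i : nat) (h : list event) : R :=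
  if lt_dec (length h) i then initial_bound
  else if excluded_middle_informative (overflowed i h) then 1
  else if excluded_middle_informative (still_open i h)
       then Rmin 1 (pot (exponent i h))
  else 0.

Lemma capped_potential_bounds i h : 0 <= capped_potential i h <= 1.
Proof.
  pose proof (pot_pos (exponent i h)).
  assert (initial_bound <= 1).
  { unfold initial_bound. change 1 with (pot 0). apply pot_mono. lia. }
  pose proof (pot_pos (-12 * Z.of_nat n0)). fold initial_bound in *.
  unfold capped_potential.
  destruct (lt_dec _ _); [lra|].
  destruct (excluded_middle_informative _); [lra|].
  destruct (excluded_middle_informative _); [|lra].
  split; [apply Rmin_glb; lra | apply Rmin_l].
Qed.

Lemma capped_potential_le_pot i h : (i <= length h)%nat -> ~ overflowed i h ->
  capped_potential i h <= pot (exponent i h).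
Proof.
  intros Hi Hov. pose proof (pot_pos (exponent i h)). unfold capped_potential.
  destruct (lt_dec _ _); [lia|].
  destruct (excluded_middle_informative _); [tauto|].
  destruct (excluded_middle_informative _); [apply Rmin_r | lra].
Qed.

Lemma capped_potential_at_start i h : reachable S0 G0 A h -> (length h <= L)%nat ->
  length h = i -> capped_potential i h <= initial_bound.
Proof.
  intros R Hl Hi. subst i.
  destruct (start_ids_facts (length h) h R Hl) as [_ [_ Hn0]].
  eapply Rle_trans; [apply capped_potential_le_pot; [lia|]|].
  - intros [j [Hj _]]. lia.
  - apply pot_mono. unfold exponent. unfold good_joins.
    rewrite Nat.sub_diag. cbn [firstn filter length]. lia.
Qed.

(* Before the start time, the value at the start time is bounded by the
   constant it replaces. *)
Lemma capped_step_before i h : reachable S0 G0 A h -> (length h < L)%nat ->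
  (length h < i)%nat ->
  expected_next (capped_potential i) h <= capped_potential i h.
Proof.
  intros R Hl Hlt.
  replace (capped_potential i h) with initial_bound
    by (unfold capped_potential; destruct (lt_dec _ _); [reflexivity|lia]).
  apply Rle_trans with (expected_next (fun _ => initial_bound) h).
  - apply expected_next_mono; auto. intros e Re.
    destruct (Nat.eq_dec (length (h ++ [e])) i).
    + apply capped_potential_at_start; auto. rewrite length_app. simpl. lia.
    + unfold capped_potential. rewrite length_app in *. simpl in *.
      destruct (lt_dec _ _); [lra|lia].
  - apply expected_next_le_const; [left; apply pot_pos | intros; lra].
Qed.

Lemma capped_step_closed i h : reachable S0 G0 A h -> (i <= length h)%nat ->
  ~ overflowed i h -> ~ still_open i h ->
  expected_next (capped_potential i) h <= capped_potential i h.
Proof.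
  intros R Hi Hov Hcl.
  replace (capped_potential i h) with 0.
  2: { unfold capped_potential. destruct (lt_dec _ _); [lia|].
       destruct (excluded_middle_informative _); [tauto|].
       destruct (excluded_middle_informative _); tauto. }
  apply Rle_trans with (expected_next (fun _ => 0) h).
  - apply expected_next_mono; auto. intros e _.
    unfold capped_potential. destruct (lt_dec _ _) as [Hlt|].
    { rewrite length_app in Hlt. simpl in Hlt. lia. }
    destruct (excluded_middle_informative _) as [Hov'|].
    { apply overflowed_snoc_inv in Hov'; tauto. }
    destruct (excluded_middle_informative _) as [Ho'|]; [|lra].
    apply still_open_snoc_inv in Ho'; tauto.
  - apply expected_next_le_const; [lra | intros; lra].
Qed.

(* An open interval: if it already has [23 |S(t)| + 4] good joins its weight
   bound makes the potential at least 1; otherwise the next event cannot make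
   it overflow and the potential drift applies below the cap. *)
Lemma capped_step_open i h : reachable S0 G0 A h -> (length h < L)%nat ->
  (i <= length h)%nat -> ~ overflowed i h -> still_open i h ->
  expected_next (capped_potential i) h <= capped_potential i h.
Proof.
  intros R Hl Hi Hov Ho.
  assert (Hcap : capped_potential i h = Rmin 1 (pot (exponent i h))).
  { unfold capped_potential. destruct (lt_dec _ _); [lia|].
    destruct (excluded_middle_informative _); [tauto|].
    destruct (excluded_middle_informative _); tauto. }
  assert (Hle1 : expected_next (capped_potential i) h <= 1)
    by (apply expected_next_le_const; [lra | apply capped_potential_bounds]).
  rewrite Hcap.
  destruct (open_interval_bounds i h R ltac:(lia) Hi Ho) as [_ Hweight].
  destruct (le_lt_dec (23 * length (start_ids i h) + 4)
                      (good_joins h i (length h))) as [Hmany|Hfew].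
  - rewrite Rmin_left; auto. apply pot_ge_1. unfold exponent. lia.
  - apply Rmin_glb; auto.
    eapply Rle_trans; [|apply potential_drift; auto].
    apply expected_next_mono; auto. intros e _.
    apply capped_potential_le_pot; [rewrite length_app; lia|].
    intros Hov'. apply overflowed_snoc_inv in Hov' as [|[_ Hov']]; auto.
    pose proof (good_join_le_1 e). lia.
Qed.

Lemma capped_step i h : reachable S0 G0 A h -> (length h < L)%nat ->
  expected_next (capped_potential i) h <= capped_potential i h.
Proof.
  intros R Hl. destruct (lt_dec (length h) i) as [Hlt|Hge].
  { apply capped_step_before; auto. }
  destruct (excluded_middle_informative (overflowed i h)) as [Hov|Hov].
  - replace (capped_potential i h) with 1.
    + apply expected_next_le_const; [lra | apply capped_potential_bounds].
    + unfold capped_potential. destruct (lt_dec _ _); [lia|].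
      destruct (excluded_middle_informative _); tauto.
  - destruct (excluded_middle_informative (still_open i h)).
    + apply capped_step_open; auto; lia.
    + apply capped_step_closed; auto; lia.
Qed.

(* Union bound over the [L] possible start times: the sum of the capped
   potentials is a supermartingale dominating the bad event, and it starts
   at most at [L * pot (-12 n0)]. *)
Lemma union_bound :
  prob S0 G0 A (some_interval_too_many_joins S0 G0) L []
  <= INR L * initial_bound.
Proof.
  set (total := fun h => fsum (seq 0 L) (fun i => capped_potential i h)).
  assert (Hnn : forall h i, In i (seq 0 L) -> 0 <= capped_potential i h)
    by (intros; apply capped_potential_bounds).
  eapply Rle_trans.
  - apply (prob_le_supermartingale _ total); [| | constructor | reflexivity].
    + intros h R Hl. unfold indicator, total.
      destruct (excluded_middle_informative _) as [Hbad|]; [|apply fsum_nonneg; auto].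
      destruct Hbad as [i [j [[_ [Hij [Hjl [_ Hfirst]]]] Hmany]]].
      replace 1 with (capped_potential i h).
      * apply (fsum_ge_term _ (fun i => capped_potential i h)); auto.
        apply in_seq. lia.
      * unfold capped_potential. destruct (lt_dec _ _); [lia|].
        destruct (excluded_middle_informative _) as [|Hov]; auto.
        exfalso. apply Hov. exists j. repeat split; auto; lia.
    + intros h R Hl. unfold total. rewrite expected_next_fsum.
      apply fsum_mono. intros i _. apply capped_step; auto.
  - unfold total. rewrite <- (length_seq L 0) at 2. apply fsum_le_const.
    intros [|i] _.
    + apply capped_potential_at_start; [constructor | simpl; lia | reflexivity].
    + unfold capped_potential. destruct (lt_dec _ _); [lra | simpl in *; lia].
Qed.

End Lifetime.

Lemma succ_le_pow2 q : S q <= 2 ^ q.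
Proof. induction q; simpl; lia. Qed.

(* [n^K <= K^K 2^n]: write [n < K (q+1)] with [q = n / K] and use
   [q + 1 <= 2^q]. *)
Lemma pow_le_exp2 n K : 1 <= K -> n ^ K <= K ^ K * 2 ^ n.
Proof.
  intros HK. set (q := n / K).
  pose proof (Nat.div_mod n K ltac:(lia)).
  pose proof (Nat.mod_upper_bound n K ltac:(lia)).
  apply Nat.le_trans with ((K * (q + 1)) ^ K); [apply Nat.pow_le_mono_l; lia|].
  rewrite Nat.pow_mul_l. apply Nat.mul_le_mono_l.
  apply Nat.le_trans with ((2 ^ q) ^ K).
  { apply Nat.pow_le_mono_l. pose proof (succ_le_pow2 q). lia. }
  rewrite <- Nat.pow_mul_r. apply Nat.pow_le_mono_r; lia.
Qed.

Local Open Scope R_scope.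

Lemma pow_times_initial_bound n K : (1 <= K)%nat ->
  INR n ^ K * pot (-12 * Z.of_nat n) <= INR (K ^ K).
Proof.
  intros HK. pose proof (pot_minus_12n n) as Hdecay.
  pose proof (le_INR _ _ (pow_le_exp2 n K HK)) as Hpoly.
  rewrite mult_INR, !pow_INR in Hpoly. replace (INR 2) with 2 in Hpoly by reflexivity.
  pose proof (pot_pos (-12 * Z.of_nat n)).
  assert (0 <= INR n ^ K) by (apply pow_le, pos_INR).
  assert (0 < 2 ^ n) by (apply pow_lt; lra).
  rewrite pow_INR. nra.
Qed.

Local Close Scope R_scope.

Theorem lemma3 :
  forall gamma : R, (0 < gamma)%R ->
  exists C : R, exists N : nat,
  forall n0 : nat, N <= n0 -> 40 <= n0 ->
  forall (L : nat), (INR L <= Rpower (INR n0) gamma)%R ->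
  forall (S0 G0 : list nat) (A : list event -> move),
    valid n0 L S0 G0 A ->
    (prob S0 G0 A (some_interval_too_many_joins S0 G0) L nil
       <= C / INR n0)%R.
Proof.
  intros gamma Hgamma.
  destruct (INR_unbounded gamma) as [k Hk].
  exists (INR ((k + 1) ^ (k + 1))), 0%nat.
  intros n0 _ Hn0 L HL S0 G0 A HV.
  assert (Hn : (0 < INR n0)%R) by (apply lt_0_INR; lia).
  assert (HLk : (INR L <= INR n0 ^ k)%R).
  { rewrite <- Rpower_pow by exact Hn. eapply Rle_trans; [exact HL|].
    apply Rle_Rpower; [apply (le_INR 1); lia | lra]. }
  pose proof (pow_times_initial_bound n0 (k + 1) ltac:(lia)) as Hdecay.
  rewrite pow_add, pow_1 in Hdecay.
  pose proof (pot_pos (-12 * Z.of_nat n0)).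
  eapply Rle_trans; [apply union_bound; exact HV|]. unfold initial_bound.
  apply Rmult_le_reg_l with (INR n0); [exact Hn|].
  replace (INR n0 * (INR ((k + 1) ^ (k + 1)) / INR n0))%R
    with (INR ((k + 1) ^ (k + 1))) by (field; lra).
  eapply Rle_trans; [|exact Hdecay].
  rewrite (Rmult_comm (INR n0 ^ k)), !Rmult_assoc.
  apply Rmult_le_compat_l; [lra|]. apply Rmult_le_compat_r; lra.
Qed.
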